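(* Let $\delta\in\mathcal D^0$ and let $C$ be an absolutely continuous copula with multidiagonal $\delta$ and density $c$. Then $c(u)\mathbf 1_{Z_\delta}(u)=0$ for a.e. $u\in I^d$, where $Z_\delta=\{u\in I^d:\ \delta'_{(i)}(u_{(i)})=0\text{ for some }1\le i\le d\}$.
   Context: $I=[0,1]$; $u_{(1)}\le\dots\le u_{(d)}$ denote the ordered coordinates of $u$. A copula is a cdf on $\mathbb R^d$ with uniform-on-$I$ coordinates. For a copula $C$ and $U\sim C$ with order statistics $U_{(i)}$, the multidiagonal is $(\delta_{(i)})$ with $\delta_{(i)}(t)=\mathbb P(U_{(i)}\le t)$; each $\delta_{(i)}$ is Lipschitz, hence differentiable a.e. $\mathcal D^0$ is the set of multidiagonals of absolutely continuous copulas. *)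

From mathcomp Require Import all_boot all_order all_algebra.
From mathcomp Require Import all_classical all_reals all_analysis.
Set Implicit Arguments. Unset Strict Implicit. Unset Printing Implicit Defensive.
Import Order.TTheory GRing.Theory Num.Theory.
Local Open Scope classical_set_scope.
Local Open Scope ring_scope.

(* Points of R^d are d-tuples of reals, with the product Borel sigma-algebra
   (library instance on n.-tuple T). *)

(* i-th order statistic (0-indexed) of u : the i-th smallest coordinate. *)
Definition ostat (R : realType) (d : nat) (u : d.-tuple R) (i : 'I_d) : R :=
  nth 0 (sort <=%R (val u)) i.

Definition box (R : realType) (d : nat) (a b : d.-tuple R) : set (d.-tuple R) :=
  [set u | forall i : 'I_d, a`_i < u`_i <= b`_i]
  .

(* lam is (a version of) d-dimensional Lebesgue measure: it gives each box
   its volume.  (On the product Borel sigma-algebra this determines lam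
   uniquely.) *)
Definition is_lebesgue_d (R : realType) (d : nat)
  (lam : {measure set (d.-tuple R) -> \bar R}) : Prop :=
  forall a b : d.-tuple R, (forall i : 'I_d, a`_i <= b`_i) ->
    lam (box a b) = (\prod_(i < d) (b`_i - a`_i))%:E.

Definition cdf_of (R : realType) (d : nat) (mu : probability (d.-tuple R) R)
  (u : d.-tuple R) : R :=
  fine (mu [set x | forall i : 'I_d, x`_i <= u`_i]).

Definition uniform_marginals (R : realType) (d : nat)
  (mu : probability (d.-tuple R) R) : Prop :=
  forall (j : 'I_d) (t : R),
    mu [set x | x`_j <= t] = (Num.min (Num.max t 0) 1)%:E.

(* C is a copula: the cdf of a probability measure mu on R^d with
   uniform-on-I marginals (mu is then the law of U ~ C). *)
Definition copula_law (R : realType) (d : nat) (C : d.-tuple R -> R)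
  (mu : probability (d.-tuple R) R) : Prop :=
  C = cdf_of mu /\ uniform_marginals mu.

Definition is_density (R : realType) (d : nat)
  (lam : {measure set (d.-tuple R) -> \bar R})
  (mu : probability (d.-tuple R) R) (c : d.-tuple R -> R) : Prop :=
  measurable_fun setT c /\ (forall u, 0 <= c u) /\
  forall A : set (d.-tuple R), measurable A ->
    mu A = (\int[lam]_(x in A) (c x)%:E)%E.

Definition multidiag (R : realType) (d : nat)
  (mu : probability (d.-tuple R) R) (i : 'I_d) (t : R) : R :=
  fine (mu [set u | ostat u i <= t]).

Definition cube (R : realType) (d : nat) : set (d.-tuple R) :=
  [set u | forall i : 'I_d, 0 <= u`_i <= 1].

Definition Zset (R : realType) (d : nat) (delta : 'I_d -> R -> R)
  : set (d.-tuple R) :=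
  [set u | cube u /\ exists i : 'I_d,
     derivable (delta i) (ostat u i) 1 /\ derive1 (delta i) (ostat u i) = 0].

(* If delta_(i)' vanishes at t then delta_(i) is k-Lipschitz at t on some
   radius, for every k > 0.  Chopping [0, 1] into m bins of width 1/m < r and
   taking, in each bin that meets such points (radius r), a window of radius
   1/m around one of them covers all of them by mass (m+1) 2k/m <= 4k.  The
   sets for radius 1/(n+1) increase with n, so their union has mass <= 4k too;
   k being arbitrary, the U_(i) landing on zeros of delta_(i)' form a null
   event.  A density vanishes almost everywhere on a null event. *)

From mathcomp Require Import all_boot all_order all_algebra.
From mathcomp Require Import all_classical all_reals all_analysis.
From mathcomp Require Import measurable_realfun lra.
Set Implicit Arguments. Unset Strict Implicit. Unset Printing Implicit Defensive.
Import Order.TTheory GRing.Theory Num.Theory.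
Local Open Scope classical_set_scope.
Local Open Scope ring_scope.

Lemma inv_truncnS_lt (R : realType) (r : R) : 0 < r -> (Num.truncn r^-1).+1%:R^-1 < r.
Proof.
move=> r0; rewrite -[r in _ < r]invrK ltf_pV2 ?posrE ?invr_gt0 //.
exact: truncnS_gt.
Qed.

Lemma bin_of_unit (R : realType) (m : nat) (t : R) : (0 < m)%N -> 0 <= t <= 1 ->
  exists2 j : nat, (j < m.+1)%N & j%:R / m%:R <= t < j.+1%:R / m%:R.
Proof.
move=> m0 /andP[t0 t1]; have m0R : 0 < m%:R :> R by rewrite ltr0n.
have /andP[jl jr] := truncn_itv (mulr_ge0 t0 (ltW m0R)).
exists (Num.truncn (t * m%:R)); last by rewrite ler_pdivrMr // ltr_pdivlMr // jl.
rewrite ltnS -(ler_nat R); apply: (le_trans jl).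
by rewrite -[leRHS]mul1r ler_wpM2r // ltW.
Qed.

Definition lipschitz_at (R : realType) (f : R -> R) (k r t : R) :=
  forall s, `|s - t| < r -> `|f s - f t| <= k * `|s - t|.

Lemma derive1_eq0_lipschitz_at (R : realType) (f : R -> R) (t k : R) :
  derivable f t 1 -> derive1 f t = 0 -> 0 < k ->
  exists2 r, 0 < r & lipschitz_at f k r t.
Proof.
move=> df f't0 k0.
have quot_cvg : (fun h : R => h^-1 *: (f (h + t) - f t)) @ 0^' --> derive1 f t.
  rewrite derive1E.
  have -> : (fun h : R => h^-1 *: (f (h + t) - f t)) =
     (fun h : R => h^-1 *: ((f \o shift t) (h *: (1:R)) - f t)).
    by apply: funext => h /=; rewrite /GRing.scale /= mulr1.
  exact: df.
rewrite f't0 in quot_cvg.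
have quot_small : \forall h \near (0:R^o), h != 0 ->
    `|h^-1 *: (f (h + t) - f t)| < k.
  by apply: (proj1 (cvgr0Pnorm_lt _) quot_cvg k k0); exact: dnbhs_filter.
have [r /= r0 Hr] := proj1 nbhs_norm0P quot_small.
exists r => // s st.
have [->|s_neq_t] := eqVneq s t; first by rewrite !subrr normr0 mulr0.
have := Hr (s - t) st; rewrite subr_eq0 s_neq_t /= subrK normrM normfV.
by move=> /(_ isT) /ltW; rewrite mulrC ler_pdivrMr ?normr_gt0 ?subr_eq0.
Qed.

Section small_covers.
Context dT (T : measurableType dT) (R : realType).
Variable mu : {measure set T -> \bar R}.

Lemma bigcup_nondecreasing_cover (S U : nat -> set T) (a : \bar R) :
  nondecreasing_seq S -> (forall n, measurable (U n)) ->
  (forall n, S n `<=` U n) -> (forall n, (mu (U n) <= a)%E) ->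
  exists2 W, measurable W /\ \bigcup_n S n `<=` W & (mu W <= a)%E.
Proof.
move=> ndS mU SU muU.
pose V n := \bigcap_(p in [set p | (n <= p)%N]) U p.
have mV n : measurable (V n) by apply: bigcap_measurable => //; exists n => /=.
have mVV : measurable (\bigcup_n V n) by exact: bigcupT_measurable.
exists (\bigcup_n V n); first split => //.
  move=> x [n _ Snx]; exists n => // p /= np; apply: SU.
  by move/subsetPset: (ndS _ _ np); apply.
have ndV : nondecreasing_seq V.
  by move=> m n mn; apply/subsetPset => x Vx p /= np; apply: Vx; exact: leq_trans np.
have cvV := @nondecreasing_cvg_mu _ _ _ mu _ mV mVV ndV.
rewrite -(cvg_lim _ cvV) //; apply: lime_le; first by apply/cvg_ex; eexists; exact: cvV.
apply: nearW => n /=; apply: le_trans (muU n).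
by apply: le_measure; rewrite ?inE //; apply: bigcap_inf => /=.
Qed.

Lemma negligible_small_covers (A : set T) :
  (forall e : R, 0 < e -> exists2 U, measurable U /\ A `<=` U & (mu U <= e%:E)%E) ->
  mu.-negligible A.
Proof.
move=> covA.
have /choice[U HU] : forall k : nat, exists U,
    (measurable U /\ A `<=` U) /\ (mu U <= k.+1%:R^-1%:E)%E.
  by move=> k; have [U ? ?] := covA k.+1%:R^-1 ltac:(by rewrite invr_gt0); exists U.
have mN : measurable (\bigcap_k U k) by apply: bigcapT_measurable => k; case: (HU k) => -[].
exists (\bigcap_k U k); split => //; last by move=> x Ax k _; case: (HU k) => -[_ /(_ x Ax)].
apply/eqP; rewrite eq_le measure_ge0 andbT; apply/lee_addgt0Pr => e e0.
rewrite add0e; pose k := Num.truncn e^-1.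
have [[mUk _] muUk] := HU k.
apply: (@le_trans _ _ (mu (U k))).
  by apply: le_measure; rewrite ?inE //; exact: bigcap_inf.
by apply: (le_trans muUk); rewrite lee_fin ltW // inv_truncnS_lt.
Qed.

End small_covers.

Section cdf_flat_points.
Context dT (T : measurableType dT) (R : realType).
Variables (mu : probability T R) (g : T -> R).
Hypothesis mg : forall t, measurable [set x | g x <= t].

Definition fun_cdf (t : R) := fine (mu [set x | g x <= t]).
Local Notation F := fun_cdf.

Lemma fun_cdfE t : mu [set x | g x <= t] = (F t)%:E.
Proof. by rewrite fineK // fin_num_measure. Qed.

Let itv_setD a b :
  [set x | a < g x <= b] = [set x | g x <= b] `\` [set x | g x <= a].
Proof.
apply/seteqP; split => x /=; rewrite ltNge; first by case/andP => /negP.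
by case => -> /negP ->.
Qed.

Lemma measurable_itv_preimage a b : measurable [set x | a < g x <= b].
Proof. by rewrite itv_setD; exact: measurableD. Qed.

Lemma mu_itv_preimage a b : a <= b -> mu [set x | a < g x <= b] = (F b - F a)%:E.
Proof.
move=> ab; rewrite itv_setD measureD //; last first.
  by rewrite -ge0_fin_numE ?measure_ge0 // fin_num_measure.
rewrite setIidr; last by move=> x /= xa; exact: le_trans ab.
by rewrite EFinB -!fun_cdfE.
Qed.

Lemma mu_window_lipschitz_at k r t h : 0 < h < r -> lipschitz_at F k r t ->
  (mu [set x | (t - h < g x <= t + h)%R] <= (2 * k * h)%:E)%E.
Proof.
move=> /andP[h0 hr] Ft; rewrite mu_itv_preimage; last by lra.
have Fr : `|F (t + h) - F t| <= k * h.
  by have := Ft (t + h); rewrite addrAC subrr add0r gtr0_norm //; apply.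
have Fl : `|F (t - h) - F t| <= k * h.
  by have := Ft (t - h); rewrite addrAC subrr add0r normrN gtr0_norm //; apply.
have := ler_norm (F (t + h) - F t); have := ler_norm (F t - F (t - h)).
by rewrite (distrC (F t)) lee_fin; lra.
Qed.

Definition lipschitz_unit_points k r :=
  [set x | 0 <= g x <= 1 /\ lipschitz_at F k r (g x)].

Lemma lipschitz_unit_points_cover k r : 0 < k -> 0 < r ->
  exists2 U, measurable U /\ lipschitz_unit_points k r `<=` U &
    (mu U <= (4 * k)%:E)%E.
Proof.
move=> k0 r0; pose m := (Num.truncn r^-1).+1.
have m0 : 0 < m%:R :> R by rewrite ltr0n.
have mr : m%:R^-1 < r := inv_truncnS_lt r0.
(* In each bin [j/m, (j+1)/m) meeting the points, a window of radius 1/m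
   around one chosen point of the bin covers the whole bin. *)
pose P (j : nat) t := lipschitz_at F k r t /\ j%:R / m%:R <= t < j.+1%:R / m%:R.
pose G (j : nat) : set T := if pselect (exists t, P j t) is left _ then
  [set x | xget 0 (P j) - m%:R^-1 < g x <= xget 0 (P j) + m%:R^-1] else set0.
have mG j : measurable (G j).
  by rewrite /G; case: pselect => _ //; exact: measurable_itv_preimage.
have mU : measurable (\big[setU/set0]_(j < m.+1) G j).
  by apply: bigsetU_measurable => j _.
exists (\big[setU/set0]_(j < m.+1) G j); first split => //.
  move=> x [xI Fx]; have [j jm /andP[jx xj]] := @bin_of_unit R m (g x) (ltn0Sn _) xI.
  rewrite -bigcup_mkord; exists j => //; rewrite /G.
  case: pselect => [ex|[]]; last by exists (g x); split; rewrite // jx xj.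
  have [_ /andP[tj jt]] := xgetPex 0 ex.
  move: jx xj tj jt; rewrite /= -natr1 mulrDl mul1r => jx xj tj jt.
  apply/andP; split; lra.
have muG j : (mu (G j) <= (2 * k * m%:R^-1)%:E)%E.
  rewrite /G; case: pselect => [ex|_]; last first.
    by rewrite measure0 lee_fin !mulr_ge0 ?invr_ge0 ?ltW.
  have [Ft _] := xgetPex 0 ex.
  by apply: (mu_window_lipschitz_at (r := r)) => //; rewrite invr_gt0 m0 mr.
apply: (le_trans (@content_subadditive _ _ _ mu _ G m.+1 (fun j _ => mG j) mU
  (@subset_refl _ _))).
apply: (@le_trans _ _ (\sum_(j < m.+1) (2 * k * m%:R^-1)%:E)%E).
  by apply: lee_sum => j _; exact: muG.
rewrite sumEFin lee_fin sumr_const card_ord -[(_ / _) *+ _]mulr_natr -natr1.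
rewrite mulrDr mulr1 -mulrA mulVf ?gt_eqF // mulr1.
have : m%:R^-1 <= 1 :> R by rewrite invf_le1 // ler1n.
by nra.
Qed.

Lemma negligible_cdf_derive1_eq0 : mu.-negligible
  [set x | 0 <= g x <= 1 /\ derivable F (g x) 1 /\ derive1 F (g x) = 0].
Proof.
apply: negligible_small_covers => e e0.
have e4 : 0 < e / 4 by rewrite divr_gt0.
pose S n := lipschitz_unit_points (e / 4) n.+1%:R^-1.
have /choice[U HU] : forall n, exists U,
    (measurable U /\ S n `<=` U) /\ (mu U <= (4 * (e / 4))%:E)%E.
  move=> n; have [|U ? ?] := lipschitz_unit_points_cover e4 (r := n.+1%:R^-1).
    by rewrite invr_gt0.
  by exists U.
have ndS : nondecreasing_seq S.
  move=> n p np; apply/subsetPset => x [xI Fx]; split => // s sx; apply: Fx.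
  by apply: (lt_le_trans sx); rewrite lef_pV2 ?posrE ?ltr0n // ler_nat.
have [W [mW SW] muW] := bigcup_nondecreasing_cover (mu := mu) ndS
  (fun n => proj1 (proj1 (HU n))) (fun n => proj2 (proj1 (HU n))) (fun n => proj2 (HU n)).
exists W; last by rewrite mulrC divfK in muW.
split => // x [xI [dF F'0]]; apply: SW.
have [r r0 Fr] := derive1_eq0_lipschitz_at dF F'0 e4.
exists (Num.truncn r^-1) => //; split => // s sx; apply: Fr.
exact: (lt_trans sx (inv_truncnS_lt r0)).
Qed.

End cdf_flat_points.

Lemma sorted_nth_le_count (R : realType) (l : seq R) (i : nat) (t : R) :
  sorted <=%R l -> (i < size l)%N ->
  (nth 0 l i <= t) = (i < count (fun x : R => (x <= t)%R) l)%N.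
Proof.
elim: l i => [|x l IH] i //= sl il.
have sl' : sorted <=%R l by move: sl; case: l {IH il} => //= y l /andP[].
have xl : all (fun y => x <= y) l by exact: (order_path_min (@le_trans _ R)).
case: (leP x t) => [xt|tx] /=; first by case: i il => [|i] //= il; rewrite IH.
have -> : count (fun y : R => (y <= t)%R) l = 0%N.
  apply/eqP; rewrite -leqn0 leqNgt -has_count; apply/hasPn => y /(allP xl) xy.
  by rewrite -ltNge (lt_le_trans tx xy).
apply/negbTE; rewrite -ltNge; apply: (lt_le_trans tx).
by case: i il => [|i] //= il; apply: (allP xl); exact: mem_nth.
Qed.

Lemma ostat_leE (R : realType) d (u : d.-tuple R) (i : 'I_d) t :
  (ostat u i <= t) = (i < count (fun x : R => (x <= t)%R) u)%N.
Proof.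
rewrite /ostat sorted_nth_le_count ?size_sort ?size_tuple //.
  by have /permP -> : perm_eq (sort <=%R (val u)) u by rewrite perm_sort.
exact: (sort_sorted (@le_total _ R)).
Qed.

Lemma measurable_ostat_le (R : realType) d (i : 'I_d) (t : R) :
  measurable [set u : d.-tuple R | ostat u i <= t].
Proof.
pose cnt (u : d.-tuple R) : R := \sum_(j < d) \1_[set v : d.-tuple R | tnth v j <= t] u.
have cntE (u : d.-tuple R) : (count (fun x : R => (x <= t)%R) u)%:R = cnt u.
  rewrite /cnt -sum1_count big_mkcond /= big_tuple natr_sum.
  apply: eq_bigr => j _; rewrite indicE.
  by case: ifP => jt /=; [rewrite mem_set | rewrite memNset //= jt].
have mcnt : measurable_fun setT cnt.
  apply: measurable_sum => j; apply: measurable_indic.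
  have := measurable_tnth j measurableT (@measurable_itv R `]-oo, t]).
  by rewrite setTI; congr measurable; apply/seteqP; split => v /=; rewrite in_itv.
have := mcnt measurableT _ (@measurable_itv R `]i%:R, +oo[).
rewrite setTI; congr measurable; apply/seteqP; split => u /=;
  by rewrite in_itv /= andbT -cntE ltr_nat ostat_leE.
Qed.

Lemma ostat_cube (R : realType) d (u : d.-tuple R) (i : 'I_d) :
  cube u -> 0 <= ostat u i <= 1.
Proof.
move=> cu; have : ostat u i \in (val u).
  by rewrite /ostat -(mem_sort <=%R) mem_nth // size_sort size_tuple.
by move=> /(nthP 0)[j]; rewrite size_tuple => jd <-; exact: (cu (Ordinal jd)).
Qed.

Lemma density_ae_eq0_negligible dT (T : measurableType dT) (R : realType)
    (lam mu : {measure set T -> \bar R}) (c : T -> R) (N : set T) :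
  measurable_fun setT c -> (forall x, 0 <= c x) ->
  (forall A, measurable A -> mu A = (\int[lam]_(x in A) (c x)%:E)%E) ->
  mu.-negligible N -> {ae lam, forall x, N x -> c x = 0}.
Proof.
move=> mc c0 muc [A [mA muA0 NA]].
have mcA : measurable_fun A (fun x => (c x)%:E).
  by apply/measurable_EFinP; exact: measurable_funS mc.
have : (\int[lam]_(x in A) `|(c x)%:E| = 0)%E.
  rewrite -muA0 muc //; apply: eq_integral => x _.
  by rewrite gee0_abs // lee_fin.
move=> /(ae_eq_integral_abs lam mA mcA); apply: filterS => x cA0 Nx.
by apply/EFin_inj; exact: cA0 (NA x Nx).
Qed.

Theorem mainTheorem16 (R : realType) (d : nat)
  (lam : {measure set (d.-tuple R) -> \bar R})
  (C : d.-tuple R -> R) (mu : probability (d.-tuple R) R)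
  (c : d.-tuple R -> R) :
  is_lebesgue_d lam ->
  copula_law C mu ->
  is_density lam mu c ->
  {ae lam, forall u, c u * \1_(Zset (multidiag mu)) u = 0}.
Proof.
move=> _ _ [mc [c0 muc]].
pose Z i := [set u | 0 <= ostat u i <= 1 /\
  derivable (multidiag mu i) (ostat u i) 1 /\ derive1 (multidiag mu i) (ostat u i) = 0].
pose Zn k := if insub k is Some i then Z i else set0.
have Zn_null k : mu.-negligible (Zn k).
  rewrite /Zn; case: insubP => [i _ _|_]; last exact: negligible_set0.
  exact: negligible_cdf_derive1_eq0 (@measurable_ostat_le R d i).
have Z_sub : Zset (multidiag mu) `<=` \bigcup_k Zn k.
  move=> u [cu [i Zi]]; exists (val i) => //.
  by rewrite /Zn valK; split; [exact: ostat_cube|].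
have := density_ae_eq0_negligible mc c0 muc (negligibleS Z_sub (negligible_bigcup Zn_null)).
apply: filterS => u cZ0; rewrite indicE.
have [Zu|Zu] := pselect (Zset (multidiag mu) u); last by rewrite memNset ?mulr0.
by rewrite (cZ0 Zu) mul0r.
Qed.
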